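(* Let $\vec{\mathcal U}\in\Upsilon$ be full and let $\theta,\phi\in L$. Then $\phi\in Bel(\preceq_{\vec{\mathcal U}}*\preceq_{\{\theta\}})$ if and only if $\theta\mid\!\sim_{\vec{\mathcal U}}\phi$.
   Context: $L$ is a propositional language built from a finite set of propositional variables with the connectives $\neg,\wedge,\vee,\rightarrow,\top,\bot$; $W$ is the finite set of propositional worlds. For $\theta\in L$, $S_\theta=\{w\in W\mid w\models\theta\}$; $E\models\phi$ means $\bigcap_{\theta\in E}S_\theta\subseteq S_\phi$; $\models\phi$ means $\emptyset\models\phi$; $E$ is consistent iff $E\not\models\bot$. Sequences: finite sequences $\vec{\mathcal U}=(\mathcal U_0,\ldots,\mathcal U_k)$ of mutually disjoint subsets of $W$ (components may be empty, possibly repeatedly). $\mathrm{rank}^{\vec{\mathcal U}}(\theta)$ is the least $i$ with $\mathcal U_i\cap S_\theta\neq\emptyset$, $\infty$ if none ($i<\infty$ for all integers $i$). $\theta\mid\!\sim_{\vec{\mathcal U}}\phi$ iff $\mathrm{rank}^{\vec{\mathcal U}}(\theta)<\mathrm{rank}^{\vec{\mathcal U}}(\theta\wedge\neg\phi)$ or $\mathrm{rank}^{\vec{\mathcal U}}(\theta)=\infty$. $\vec{\mathcal U}$ is full iff $\bigcup_i\mathcal U_i=W$, empty iff $\bigcup_i\mathcal U_i=\emptyset$; $\Upsilon$ is the set of sequences which are full or empty. For $\vec{\mathcal U}\in\Upsilon$, $\theta\preceq_{\vec{\mathcal U}}\phi$ iff (not $\neg\theta\vee\neg\phi\mid\!\sim_{\vec{\mathcal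 U}}\theta$) or $\neg\phi\mid\!\sim_{\vec{\mathcal U}}\bot$. E-relation: a relation $\preceq\subseteq L\times L$ such that for all $\theta,\phi,\psi$: (E1) transitivity; (E2) $\theta\models\phi$ implies $\theta\preceq\phi$; (E3) $\theta\preceq\theta\wedge\phi$ or $\phi\preceq\theta\wedge\phi$; (E4) if $\bot\prec\psi$ for some $\psi$, then $\theta\preceq\phi$ for all $\theta$ implies $\models\phi$; $\prec$ is the strict part. Belief set: $Bel(\preceq)=\{\theta\mid\bot\prec\theta\}$ if $\bot\prec\theta$ for some $\theta$, and $Bel(\preceq)=L$ otherwise. Sequence revision: for $\vec{\mathcal U}=(\mathcal U_0,\ldots,\mathcal U_k)$, $\vec{\mathcal V}=(\mathcal V_0,\ldots,\mathcal V_m)$ in $\Upsilon$, if $\vec{\mathcal U}$ is full then $\vec{\mathcal U}*\vec{\mathcal V}=(\mathcal U_0\cap\mathcal V_0,\ldots,\mathcal U_k\cap\mathcal V_0,\ \ldots,\ \mathcal U_0\cap\mathcal V_m,\ldots,\mathcal U_k\cap\mathcal V_m)$; otherwise $\vec{\mathcal U}*\vec{\mathcal V}=\vec{\mathcal V}$. Revision of E-relations: every E-relation equals $\preceq_{\vec{\mathcal U}}$ for some $\vec{\mathcal U}\in\Upsilon$, and $\preceq_K*\preceq_E:=\preceq_{\vec{\mathcal U}*\vec{\mathcal V}}$ for any $\vec{\mathcal U},\vec{\mathcal V}\in\Upsilon$ with $\preceq_K=\preceq_{\vec{\mathcal U}}$, $\preceq_E=\preceq_{\vec{\mathcal V}}$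 (independent of the choice). Relation generated by a set $E\subseteq L$: $\theta\prec_E\phi$ iff $E\not\models\bot$, $\not\models\theta$, and for every $E'\subseteq E$ with $E'\cup\{\neg\phi\}$ consistent there is $E''\subseteq E$ with $|E'|<|E''|$ and $E''\cup\{\neg\theta\}$ consistent; $\theta\preceq_E\phi$ iff not $\phi\prec_E\theta$. (For finite $E$, $\preceq_E$ is an E-relation.) In particular $\preceq_{\{\theta\}}$ is this relation for $E=\{\theta\}$. *)

From HB Require Import structures.
From mathcomp Require Import all_boot.
Set Implicit Arguments.
Unset Strict Implicit.
Unset Printing Implicit Defensive.

Inductive form (Var : Type) : Type :=
  | PVar of Var
  | PNeg of form Var
  | PAnd of form Var & form Var
  | POr  of form Var & form Var
  | PImp of form Var & form Var
  | PTop
  | PBot.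
Arguments PTop {Var}.
Arguments PBot {Var}.

Section Form.
Variable Var : finType.

Fixpoint form_eqb (a b : form Var) : bool :=
  match a, b with
  | PVar x, PVar y => x == y
  | PNeg a1, PNeg b1 => form_eqb a1 b1
  | PAnd a1 a2, PAnd b1 b2 => form_eqb a1 b1 && form_eqb a2 b2
  | POr a1 a2, POr b1 b2 => form_eqb a1 b1 && form_eqb a2 b2
  | PImp a1 a2, PImp b1 b2 => form_eqb a1 b1 && form_eqb a2 b2
  | PTop, PTop => true
  | PBot, PBot => true
  | _, _ => false
  end.

Lemma form_eqP : Equality.axiom form_eqb.
Proof.
elim=> [x|a IHa|a1 IH1 a2 IH2|a1 IH1 a2 IH2|a1 IH1 a2 IH2||]
       [y|b|b1 b2|b1 b2|b1 b2||] /=; try by constructor.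
- by apply: (iffP eqP) => [->|[]].
- by apply: (iffP (IHa b)) => [->|[]].
- by apply: (iffP andP) => [[/IH1 -> /IH2 ->]|[<- <-]]; split; [apply/IH1|apply/IH2].
- by apply: (iffP andP) => [[/IH1 -> /IH2 ->]|[<- <-]]; split; [apply/IH1|apply/IH2].
- by apply: (iffP andP) => [[/IH1 -> /IH2 ->]|[<- <-]]; split; [apply/IH1|apply/IH2].
Qed.
End Form.

HB.instance Definition _ (Var : finType) := hasDecEq.Build (form Var) (@form_eqP Var).

Section Semantics.
Variable Var : finType.

Definition world := {ffun Var -> bool}.

Fixpoint sat (w : world) (t : form Var) : bool :=
  match t with
  | PVar x => w x
  | PNeg a => ~~ sat w a
  | PAnd a b => sat w a && sat w b
  | POr a b => sat w a || sat w b
  | PImp a b => sat w a ==> sat w b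
  | PTop => true
  | PBot => false
  end.

Definition S (t : form Var) : {set world} := [set w | sat w t].

Definition entails (E : seq (form Var)) (p : form Var) : Prop :=
  [set w | all (sat w) E] \subset S p.

Definition valid (p : form Var) : Prop := entails [::] p.

Definition consistent (E : seq (form Var)) : Prop := ~ entails E PBot.

Definition is_sequence (U : seq {set world}) : Prop :=
  forall i j, i < size U -> j < size U -> i != j ->
    [disjoint nth set0 U i & nth set0 U j].

Definition full (U : seq {set world}) : Prop :=
  \bigcup_(A <- U) A = [set: world].

Definition empty_seq (U : seq {set world}) : Prop :=
  \bigcup_(A <- U) A = set0.

Definition Upsilon (U : seq {set world}) : Prop :=
  is_sequence U /\ (full U \/ empty_seq U).

(* rank; None stands for infinity *)
Definition rank (U : seq {set world}) (t : form Var) : option nat :=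
  let i := find (fun A => A :&: S t != set0) U in
  if i < size U then Some i else None.

Definition rank_lt (a b : option nat) : Prop :=
  match a, b with
  | Some i, Some j => i < j
  | Some _, None => True
  | None, _ => False
  end.

Definition nm_cons (U : seq {set world}) (t p : form Var) : Prop :=
  rank_lt (rank U t) (rank U (PAnd t (PNeg p))) \/ rank U t = None.

Definition preceqU (U : seq {set world}) (t p : form Var) : Prop :=
  ~ nm_cons U (POr (PNeg t) (PNeg p)) t \/ nm_cons U (PNeg p) PBot.

Definition strict (R : form Var -> form Var -> Prop) (t p : form Var) : Prop :=
  R t p /\ ~ R p t.

Definition Bel (R : form Var -> form Var -> Prop) (t : form Var) : Prop :=
  ((exists psi, strict R PBot psi) /\ strict R PBot t) \/
  ~ (exists psi, strict R PBot psi).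

Definition seq_rev (U V : seq {set world}) : seq {set world} :=
  if [forall w, w \in \bigcup_(A <- U) A] then
    flatten [seq [seq A :&: B | A <- U] | B <- V]
  else V.

(* revision of E-relations: <=_K * <=_E := <=_{U * V} for representations
   <=_K = <=_U, <=_E = <=_V with U, V in Upsilon (independent of choice). *)
Definition revise (K E : form Var -> form Var -> Prop) (t p : form Var) : Prop :=
  exists U V, [/\ Upsilon U, Upsilon V,
    (forall a b, K a b <-> preceqU U a b),
    (forall a b, E a b <-> preceqU V a b) &
    preceqU (seq_rev U V) t p].

(* relation generated by a finite set E (given as a list); subsets E' of E
   are duplicate-free lists with elements in E, |E'| = size E' *)
Definition gen_strict (E : seq (form Var)) (t p : form Var) : Prop :=
  [/\ consistent E, ~ valid t &
    forall E' : seq (form Var), uniq E' -> {subset E' <= E} ->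
      consistent (PNeg p :: E') ->
      exists E'' : seq (form Var), [/\ uniq E'', {subset E'' <= E},
        size E' < size E'' & consistent (PNeg t :: E'')]].

Definition gen_rel (E : seq (form Var)) (t p : form Var) : Prop :=
  ~ gen_strict E p t.

End Semantics.

From HB Require Import structures.
From mathcomp Require Import all_boot zify.
From Stdlib Require Import Setoid.
Set Implicit Arguments. Unset Strict Implicit. Unset Printing Implicit Defensive.

(* Everything that [preceqU X], [nm_cons X] and [Bel] can observe of a
   sequence X is its first-block map: C |-> the first component of X meeting C,
   intersected with C.  Indeed theta <=_X phi iff rank (~ theta) <= rank (~ phi),
   theta |~_X phi iff the first block of S_theta lies in S_phi, and
   Bel (<=_X) = {phi | T |~_X phi}.  Hence revision is well defined, and when U
   is full the first block of C in U * V is the first block, in U, of the first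
   block of C in V.  The relation generated by {theta} is represented by
   (S_theta, W \ S_theta) (or by the empty sequence if theta is inconsistent),
   whose first block of W is S_theta; so Bel (<=_U * <=_{theta}) consists of the
   phi with theta |~_U phi. *)

Lemma sublist1 (T : eqType) (x : T) s :
  uniq s -> {subset s <= [:: x]} -> s = [::] \/ s = [:: x].
Proof.
case: s => [|y [|z s]] uniq_s sub_s; [by left | right | ].
  by have := sub_s y; rewrite !inE eqxx => /(_ isT)/eqP->.
by have := uniq_leq_size uniq_s sub_s.
Qed.

Section SequenceRevision.
Variable Var : finType.
Implicit Types (X Y U V : seq {set world Var}) (a b t p : form Var)
  (A B C D : {set world Var}).

Lemma setT_world_neq0 : [set: world Var] != set0.
Proof. by apply/set0Pn; exists [ffun=> true]. Qed.

Lemma S_neg a : S (PNeg a) = ~: S a. Proof. by apply/setP=> w; rewrite !inE. Qed.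
Lemma S_and a b : S (PAnd a b) = S a :&: S b. Proof. by apply/setP=> w; rewrite !inE. Qed.
Lemma S_or a b : S (POr a b) = S a :|: S b. Proof. by apply/setP=> w; rewrite !inE. Qed.
Lemma S_top : S (@PTop Var) = setT. Proof. by apply/setP=> w; rewrite !inE. Qed.
Lemma S_bot : S (@PBot Var) = set0. Proof. by apply/setP=> w; rewrite !inE. Qed.

(* [rank_set X C = size X] plays the role of the rank infinity. *)
Definition rank_set X C := find (fun A => A :&: C != set0) X.

Definition first_block X C := nth set0 X (rank_set X C) :&: C.

Lemma rank_set_cons A X C :
  rank_set (A :: X) C = if A :&: C != set0 then 0 else (rank_set X C).+1.
Proof. by []. Qed.

Lemma first_block_cons A X C :
  first_block (A :: X) C = if A :&: C != set0 then A :&: C else first_block X C.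
Proof. by rewrite /first_block /rank_set /=; case: ifP. Qed.

Lemma first_block_nil C : first_block [::] C = set0.
Proof. exact: set0I. Qed.

Lemma rank_set_le_size X C : rank_set X C <= size X.
Proof. exact: find_size. Qed.

Lemma rank_set0 X : rank_set X set0 = size X.
Proof. by apply: hasNfind; apply/hasPn => A _; rewrite setI0 eqxx. Qed.

Lemma rank_setU X C D : rank_set X (C :|: D) = minn (rank_set X C) (rank_set X D).
Proof.
elim: X => [|A X IH] //; rewrite !rank_set_cons IH setIUr setU_eq0 negb_and.
by case: (A :&: C != set0); case: (A :&: D != set0) => //=; rewrite minnSS.
Qed.

Lemma rankE X t :
  rank X t = if rank_set X (S t) < size X then Some (rank_set X (S t)) else None.
Proof. by []. Qed.

Lemma nm_cons_rank_set X a b : nm_cons X a b <->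
  rank_set X (S a) < rank_set X (S a :\: S b) \/ size X <= rank_set X (S a).
Proof.
rewrite /nm_cons !rankE S_and S_neg -setDE.
case: ltnP => ia; case: ltnP => ja //=.
- by split=> -[] //; left.
- by split=> _; left=> //; apply: leq_trans ia ja.
- by split=> _; right.
- by split=> _; right.
Qed.

Lemma preceqU_rank_set X t p :
  preceqU X t p <-> rank_set X (~: S t) <= rank_set X (~: S p).
Proof.
rewrite /preceqU !nm_cons_rank_set !S_or !S_neg S_bot setD0 setDE setUK.
rewrite rank_setU ltnn.
have := rank_set_le_size X (~: S t); have := rank_set_le_size X (~: S p).
move: (rank_set X (~: S t)) (rank_set X (~: S p)) => m n hn hm.
split=> [[|[]]|]; lia.
Qed.

Lemma nm_cons_preceqU X a b : nm_cons X a b <->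
  ~ preceqU X (PNeg (PAnd a (PNeg b))) (PNeg a) \/ preceqU X (PNeg PBot) (PNeg a).
Proof.
rewrite nm_cons_rank_set !preceqU_rank_set !S_neg S_and S_neg S_bot !setCK.
by rewrite -setDE rank_set0 ltnNge; split=> -[]; auto; move/negP; auto.
Qed.

Lemma first_block_sub_rank_set X C D : first_block X C \subset D <->
  rank_set X C < rank_set X (C :\: D) \/ size X <= rank_set X C.
Proof.
elim: X => [|A X IH]; first by rewrite first_block_nil sub0set; split=> // _; right.
rewrite first_block_cons !rank_set_cons setIDA setD_eq0 /=.
case: ifP => [_ | /negbFE/eqP AC0].
  by case: (A :&: C \subset D); split=> //; [left | case].
by rewrite AC0 sub0set /= !ltnS.
Qed.

Lemma nm_consE X a b : nm_cons X a b <-> first_block X (S a) \subset S b.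
Proof. by rewrite first_block_sub_rank_set nm_cons_rank_set. Qed.

Lemma rank_setT_le X C : rank_set X setT <= rank_set X C.
Proof. by rewrite -(setUT C) rank_setU geq_minl. Qed.

Lemma strict_preceqU_bot X p :
  strict (preceqU X) PBot p <-> rank_set X setT < rank_set X (~: S p).
Proof.
rewrite /strict !preceqU_rank_set S_bot setC0 ltnNge.
by split=> [[_ /negP]|/negP] //; split=> //; apply: rank_setT_le.
Qed.

Lemma Bel_ext (R R' : form Var -> form Var -> Prop) t :
  (forall a b, R a b <-> R' a b) -> Bel R t <-> Bel R' t.
Proof. by move=> RR'; rewrite /Bel /strict; setoid_rewrite RR'. Qed.

Lemma Bel_preceqU X t : Bel (preceqU X) t <-> nm_cons X PTop t.
Proof.
have has_strict_bot : (exists p, strict (preceqU X) PBot p) <->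
    rank_set X setT < size X.
  split=> [[p /strict_preceqU_bot lt]|lt]; first exact: leq_trans lt (rank_set_le_size _ _).
  by exists PTop; rewrite strict_preceqU_bot S_top setCT rank_set0.
rewrite /Bel has_strict_bot strict_preceqU_bot nm_cons_rank_set S_top setTD.
have := rank_set_le_size X (~: S t).
move: (rank_set X setT) (rank_set X (~: S t)) => m r hr.
split=> [[[]|]|[]]; lia.
Qed.

Definition point_form (w : world Var) : form Var :=
  foldr (fun x f => PAnd (if w x then PVar x else PNeg (PVar x)) f) PTop (enum Var).

Definition set_form A : form Var := foldr (@POr Var) PBot [seq point_form w | w <- enum A].

Lemma S_point_form w : S (point_form w) = [set w].
Proof.
apply/setP=> v; rewrite !inE /point_form.
have -> : forall s, sat v (foldr (fun x f =>
    PAnd (if w x then PVar x else PNeg (PVar x)) f) PTop s) = all (fun x => v x == w x) s.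
  by elim=> //= x s ->; case: (w x) => /=; case: (v x).
apply/allP/eqP => [vw | -> //]; apply/ffunP => x; apply/eqP/vw; exact: mem_enum.
Qed.

Lemma S_set_form A : S (set_form A) = A.
Proof.
apply/setP=> v; rewrite inE /set_form -[v \in A]mem_enum.
elim: (enum A) => //= w s IH.
have := S_point_form w; move/setP/(_ v); rewrite !inE => ->.
by rewrite IH.
Qed.

(* Every set of worlds is definable ([S_set_form]), so [nm_cons X], which
   [preceqU X] determines, pins down [first_block X]. *)
Lemma eq_preceqU_first_block X Y :
  (forall a b, preceqU X a b <-> preceqU Y a b) <-> first_block X =1 first_block Y.
Proof.
split=> [eqXY C | eqXY a b]; last by rewrite /preceqU !nm_consE !eqXY.
have sub D : first_block X C \subset D <-> first_block Y C \subset D.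
  by rewrite -(S_set_form C) -(S_set_form D) -!nm_consE !nm_cons_preceqU !eqXY.
apply/eqP; rewrite eqEsubset; apply/andP.
by split; [apply/(sub _).2 | apply/(sub _).1]; apply: subxx.
Qed.

Lemma first_block_eq0 X C :
  (first_block X C == set0) = ~~ has (fun A => A :&: C != set0) X.
Proof.
rewrite /first_block /rank_set; have [meet | /hasNfind->] := boolP (has _ X).
  exact/negbTE/(nth_find set0 meet).
by rewrite nth_default // set0I eqxx.
Qed.

Lemma full_has X C : full X -> C != set0 -> has (fun A => A :&: C != set0) X.
Proof.
move=> fullX /set0Pn[w wC].
have : w \in \bigcup_(A <- X) A by rewrite fullX inE.
rewrite bigcup_seq => /bigcupP[A AX wA]; apply/hasP; exists A => //.
by apply/set0Pn; exists w; rewrite inE wA.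
Qed.

Lemma first_block_cat X Y C : first_block (X ++ Y) C =
  if has (fun A => A :&: C != set0) X then first_block X C else first_block Y C.
Proof. by elim: X => [|A X IH] //=; rewrite !first_block_cons; case: ifP. Qed.

Lemma first_block_map_setI B X C :
  first_block [seq A :&: B | A <- X] C = first_block X (B :&: C).
Proof.
elim: X => [|A X IH]; first by rewrite !first_block_nil.
by rewrite /= !first_block_cons IH setIA.
Qed.

Lemma first_block_product U V C : full U ->
  first_block (flatten [seq [seq A :&: B | A <- U] | B <- V]) C =
  first_block U (first_block V C).
Proof.
move=> fullU; elim: V => [|B V IH] /=.
  by rewrite !first_block_nil /first_block setI0.
rewrite first_block_cat first_block_map_setI first_block_cons IH has_map.
case: (eqVneq (B :&: C) set0) => [BC0 | BC] /=.
  rewrite ifN //; apply/hasPn => A _ /=.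
  by rewrite -setIA BC0 setI0 eqxx.
rewrite ifT //; apply: sub_has (full_has fullU BC) => A /=.
by rewrite setIA.
Qed.

Lemma first_block_seq_rev U V C : Upsilon U ->
  first_block (seq_rev U V) C =
  if first_block U setT == set0 then first_block V C
  else first_block U (first_block V C).
Proof.
case=> _ [fullU | emptyU]; rewrite /seq_rev first_block_eq0.
  rewrite full_has ?setT_world_neq0 // ifT ?first_block_product //.
  by apply/forallP => w; rewrite fullU inE.
rewrite ifF; last by apply/negbTE/forallPn; exists [ffun=> true]; rewrite emptyU inE.
rewrite ifT //; apply/hasPn => A AU; rewrite setIT negbK -subset0 -emptyU.
by rewrite bigcup_seq (bigcup_sup A).
Qed.

Lemma reviseE K E U V : Upsilon U -> Upsilon V ->
  (forall a b, K a b <-> preceqU U a b) -> (forall a b, E a b <-> preceqU V a b) ->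
  forall t p, revise K E t p <-> preceqU (seq_rev U V) t p.
Proof.
move=> UpsU UpsV KU EV t p; split=> [|rev]; last by exists U, V.
case=> U' [V'] [UpsU' _ KU' EV' rev'].
have /eq_preceqU_first_block eqU : forall a b, preceqU U' a b <-> preceqU U a b.
  by move=> a b; rewrite -KU' KU.
have /eq_preceqU_first_block eqV : forall a b, preceqU V' a b <-> preceqU V a b.
  by move=> a b; rewrite -EV' EV.
have eqUV : forall a b, preceqU (seq_rev U' V') a b <-> preceqU (seq_rev U V) a b.
  by apply/eq_preceqU_first_block => C; rewrite !first_block_seq_rev // !eqU !eqV.
exact/eqUV.
Qed.

Lemma consistent1 a : consistent [:: a] <-> S a != set0.
Proof.
rewrite /consistent /entails S_bot subset0.
have -> : [set w | all (sat w) [:: a]] = S a by apply/setP=> w; rewrite !inE /= andbT.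
by split=> /negP.
Qed.

Lemma consistent2 a b : consistent [:: a; b] <-> S a :&: S b != set0.
Proof.
rewrite /consistent /entails S_bot subset0.
have -> : [set w | all (sat w) [:: a; b]] = S a :&: S b.
  by apply/setP=> w; rewrite !inE /= andbT.
by split=> /negP.
Qed.

Lemma validE p : valid p <-> ~: S p == set0.
Proof.
rewrite /valid /entails -subset0 -setCT setCS.
by have -> : [set w : world Var | all (sat w) [::]] = setT by apply/setP=> w; rewrite !inE.
Qed.

Lemma gen_strict1 th p t : gen_strict [:: th] p t <->
  [&& S th != set0, ~: S p != set0,
      (~: S t != set0) ==> (S th :&: ~: S p != set0) & S th :&: ~: S t == set0].
Proof.
apply: (iff_trans _ (rwP and4P)); split.
  case=> /consistent1 th0 p_not_valid more; split=> //.
  - by apply/negP => /validE.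
  - apply/implyP => t0.
    have [||E'' [uniqE'' subE'' /= lt]] := more [::] isT; rewrite ?consistent1 ?S_neg //.
    by case: (sublist1 uniqE'' subE'') lt => -> // _; rewrite consistent2 S_neg setIC.
  - apply/negPn/negP => tth; have [||E'' [uniqE'' subE'' lt _]] := more [:: th] isT.
    + by move=> x.
    + by rewrite consistent2 S_neg setIC.
    + by have := leq_trans lt (uniq_leq_size uniqE'' subE'').
case=> th0 p0 /implyP tp tth; split=> [|/validE|E' uniqE' subE']; first exact/consistent1.
  exact/negP.
case: (sublist1 uniqE' subE') => ->; rewrite ?consistent1 ?consistent2 S_neg.
  by move=> t0; exists [:: th]; split=> //; rewrite consistent2 S_neg setIC tp.
by rewrite setIC tth.
Qed.

Lemma rank_set_pair A C : rank_set [:: A; ~: A] C =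
  if A :&: C != set0 then 0 else if C != set0 then 1 else 2.
Proof.
rewrite /rank_set /=; case: ifP => // /negbFE/eqP AC0.
have -> : ~: A :&: C = C; last by case: ifP.
by apply/setP=> w; move/setP/(_ w): AC0; rewrite !inE; case: (w \in A).
Qed.

(* [gen_rel [:: th]] compares formulas by the size of the largest subset of
   {th} consistent with their negation (-1 if they are valid); that size is 1
   minus the rank of the negation in (S th, ~: S th). *)
Lemma gen_rel1 th : S th != set0 ->
  forall t p, gen_rel [:: th] t p <-> preceqU [:: S th; ~: S th] t p.
Proof.
move=> th0 t p; rewrite /gen_rel gen_strict1 preceqU_rank_set !rank_set_pair.
rewrite (rwP negP) th0.
case: (eqVneq (~: S t) set0) => [-> | _]; case: (eqVneq (~: S p) set0) => [-> | _];
  rewrite ?setI0 ?eqxx;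
  by case: (S th :&: ~: S t == set0); case: (S th :&: ~: S p == set0).
Qed.

Lemma Upsilon_nil : @Upsilon Var [::].
Proof. by split=> [i j //|]; right; rewrite /empty_seq big_nil. Qed.

Lemma Upsilon_pair A : Upsilon [:: A; ~: A].
Proof.
split; last by left; rewrite /full !big_cons big_nil setU0 setUCr.
by case=> [|[|i]] [|[|j]] //= _ _ _; rewrite -setI_eq0 ?setICr // setIC setICr.
Qed.

Lemma gen_rel1_repr th : exists V, [/\ Upsilon V,
  forall a b, gen_rel [:: th] a b <-> preceqU V a b & first_block V setT = S th].
Proof.
have [th0 | th0] := eqVneq (S th) set0.
  exists [::]; split; [exact: Upsilon_nil | | by rewrite first_block_nil th0].
  by move=> a b; rewrite preceqU_rank_set /gen_rel gen_strict1 th0 eqxx.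
exists [:: S th; ~: S th]; split; [exact: Upsilon_pair | exact: gen_rel1 |].
by rewrite first_block_cons setIT th0.
Qed.

End SequenceRevision.

Theorem proposition9 (Var : finType) (U : seq {set world Var})
  (th ph : form Var) :
  Upsilon U -> full U ->
  (Bel (revise (preceqU U) (gen_rel [:: th])) ph <-> nm_cons U th ph).
Proof.
move=> UpsU fullU; have [V [UpsV genV Vth]] := gen_rel1_repr th.
have revUV := reviseE UpsU UpsV (fun a b => iff_refl _) genV.
have U_nonempty : first_block U setT != set0.
  by rewrite first_block_eq0 negbK full_has ?setT_world_neq0.
rewrite (Bel_ext _ revUV) Bel_preceqU !nm_consE first_block_seq_rev //.
by rewrite (negbTE U_nonempty) S_top Vth.
Qed.
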